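(* Let $\beta$ be a nonzero real number and let $T_\beta\colon\mathbb{R}[x]\to\mathbb{R}[x]$ be the linear operator defined by $T_\beta[x^n]=H_n(\tfrac{\beta}{2}x)$ for all $n\ge0$. Then $$T_\beta=\sum_{n=0}^{\infty}H_n\!\left(\tfrac{\beta-1}{2}x\right)\frac{D^n}{n!},$$ i.e. the coefficient polynomials of $T_\beta$ are $Q_n(x)=H_n(\tfrac{\beta-1}{2}x)$. In particular, the coefficient polynomials of the transformation $x^n\mapsto H_n(x)$ have real interlacing roots.
   Context: $H_n$ denotes the $n$th physicist Hermite polynomial, $H_n(x)=n!\sum_{m=0}^{\lfloor n/2\rfloor}\frac{(-1)^m}{m!(n-2m)!}(2x)^{n-2m}$. $D=d/dx$. Every linear operator $T\colon\mathbb{C}[x]\to\mathbb{C}[x]$ has a unique representation $T=\sum_{k=0}^\infty \frac{Q_k(x)}{k!}D^k$ with polynomials $Q_k(x)$ (the coefficient polynomials of $T$), where the sum acts finitely on each polynomial. *)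

From HB Require Import structures.
From mathcomp Require Import all_boot all_order all_algebra.
From mathcomp Require Export reals.
Set Implicit Arguments. Unset Strict Implicit. Unset Printing Implicit Defensive.
Import Order.TTheory GRing.Theory Num.Theory.
Local Open Scope ring_scope.

Definition hermite (R : fieldType) (n : nat) : {poly R} :=
  \sum_(m < n./2.+1)
     (((-1) ^+ m * (n`!)%:R / ((m`!)%:R * ((n - 2 * m)`!)%:R)) *: ('X *+ 2) ^+ (n - 2 * m)).

Definition hermite_scaled (R : fieldType) (c : R) (n : nat) : {poly R} :=
  hermite R n \Po (c *: 'X).

Definition Tbeta (R : fieldType) (beta : R) (p : {poly R}) : {poly R} :=
  \sum_(i < size p) p`_i *: hermite_scaled (beta / 2) i.

(* p and q have only real, simple roots, deg q = deg p + 1, and the roots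
   s_0 < ... < s_n of q and r_0 < ... < r_{n-1} of p strictly interlace:
   s_0 < r_0 < s_1 < r_1 < ... < r_{n-1} < s_n. *)
Definition real_interlacing (R : realDomainType) (p q : {poly R}) : Prop :=
  exists (r s : seq R),
    [/\ p != 0, q != 0, (size p).-1 = size r, (size q).-1 = size s
      & [/\ size s = (size r).+1, all (root p) r, all (root q) s
          & forall i, (i < size r)%N -> s`_i < r`_i < s`_i.+1]].

From HB Require Import structures.
From mathcomp Require Import all_boot all_order all_algebra.
From mathcomp Require Import reals.
From mathcomp Require Import zify ring lra polyrcf.
Import Order.TTheory GRing.Theory Num.Theory.
Local Open Scope ring_scope.

(* Taylor expansion gives the addition theorem
   H_k(x + y) = sum_i C(k, i) H_(k-i)(x) (2y)^i; with c = (beta - 1)/2 and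
   y = x/2 it reads T_beta[x^k] = H_k((c + 1/2) x) = sum_n H_n(c x) D^n x^k / n!,
   and linearity gives the operator identity.
   For beta = 2 the polynomials P_n = H_n(x/2) are monic and satisfy
   P_(n+2) = x P_(n+1) - 2(n+1) P_n.  For any such three-term recurrence with
   positive coefficients, P_(n+2) equals -b_n P_n at the roots of P_(n+1), so it
   alternates in sign there; the intermediate value theorem then places one root
   of P_(n+2) in each of the n+2 gaps, and interlacing follows by induction. *)

Section Hermite.
Variable R : numFieldType.

Definition hermite_coef (n k : nat) : R :=
  if (k <= n)%N && ~~ odd (n - k) then
    (-1) ^+ (n - k)./2 * (n`!)%:R / ((((n - k)./2)`!)%:R * (k`!)%:R) * 2 ^+ k
  else 0.

Lemma coef_hermite n k : (hermite R n)`_k = hermite_coef n k.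
Proof.
have index_eq m : (m <= n./2)%N ->
    (k == n - 2 * m)%N = [&& (k <= n)%N, ~~ odd (n - k) & m == (n - k)./2].
  move=> lemn; apply/idP/and3P => [/eqP ->|[? ? /eqP ->]]; first by split; lia.
  by apply/eqP; lia.
rewrite /hermite coef_sum.
under eq_bigr => m _ do
  rewrite coefZ exprMn_n coefMn coefXn (index_eq _ (ltn_ord m)).
rewrite /hermite_coef; case: ifP => [/andP[le_kn even_nk]|odd_nk]; last first.
  by rewrite big1 // => m _; rewrite andbA odd_nk /= mul0rn mulr0.
have lt_m0 : ((n - k)./2 < n./2.+1)%N by lia.
rewrite (bigD1 (Ordinal lt_m0)) //= big1 ?addr0 => [|m /eqP neq_m].
  rewrite le_kn even_nk eqxx mulr1n natrX.
  by have -> : (n - 2 * (n - k)./2 = k)%N by lia.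
have /negbTE -> : (m != (n - k)./2 :> nat).
  by apply/eqP => eq_m; apply: neq_m; apply: val_inj.
by rewrite le_kn even_nk /= mul0rn mulr0.
Qed.

Lemma hermite_coef_even n k m : n = (k + 2 * m)%N ->
  hermite_coef n k = (-1) ^+ m * (n`!)%:R / ((m`!)%:R * (k`!)%:R) * 2 ^+ k.
Proof.
move=> En; rewrite /hermite_coef.
have -> : ((k <= n)%N && ~~ odd (n - k)) = true by apply/andP; split; lia.
by have -> : ((n - k)./2 = m)%N by lia.
Qed.

Lemma hermite_coef_odd n k m : n = (k + 2 * m).+1 -> hermite_coef n k = 0.
Proof.
move=> En; rewrite /hermite_coef.
by have -> : ((k <= n)%N && ~~ odd (n - k)) = false by apply/negbTE/nandP; lia.
Qed.

Lemma hermite_coef_small n k : (n < k)%N -> hermite_coef n k = 0.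
Proof.
move=> lt_nk; rewrite /hermite_coef.
by have -> : ((k <= n)%N && ~~ odd (n - k)) = false by apply/negbTE/nandP; lia.
Qed.

Lemma leq_parity_cases n k :
  [\/ (n < k)%N, exists m, n = (k + 2 * m)%N | exists m, n = (k + 2 * m).+1].
Proof.
have [lt_nk | le_kn] := ltnP n k; first exact: Or31.
by case: (boolP (odd (n - k))) => parity; [apply: Or33 | apply: Or32];
  exists (n - k)./2; lia.
Qed.

Lemma natf_fact_neq0 n : (n`!)%:R != 0 :> R.
Proof. by rewrite pnatr_eq0 -lt0n fact_gt0. Qed.

Lemma natf_bin n k : (k <= n)%N ->
  ('C(n, k))%:R = (n`!)%:R / ((k`!)%:R * ((n - k)`!)%:R) :> R.
Proof.
move=> le_kn; rewrite -(bin_fact le_kn) !natrM mulfK //.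
by rewrite mulf_neq0 // natf_fact_neq0.
Qed.

Lemma hermite_coef_rec n k :
  hermite_coef n.+1 k.+1 = 2 * hermite_coef n k - (k.+2)%:R * hermite_coef n k.+2.
Proof.
have fact_neq0 := natf_fact_neq0.
case: (leq_parity_cases n k) => [lt_nk | [m En] | [m En]].
- by rewrite !hermite_coef_small ?mulr0 ?subr0 //; lia.
- rewrite (hermite_coef_even _ _ m) ?(hermite_coef_even n k m); try lia.
  case: m En => [|m] En.
    rewrite (hermite_coef_small n) ?mulr0 ?subr0; last lia.
    subst n; rewrite muln0 addn0 !factS fact0 exprS !natrM; field.
    by rewrite fact_neq0 nat1r pnatr_eq0.
  rewrite (hermite_coef_even n k.+2 m); last lia.
  subst n; rewrite !factS !natrM -!natr1 natrD natrM -natr1 !exprS; field.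
  by rewrite !fact_neq0 !natr1 !pnatr_eq0.
- rewrite (hermite_coef_odd _ _ m) ?(hermite_coef_odd n k m); try lia.
  case: m En => [|m] En.
    by rewrite hermite_coef_small ?mulr0 ?subrr //; lia.
  by rewrite (hermite_coef_odd n k.+2 m) ?mulr0 ?subrr //; lia.
Qed.

Lemma hermite_coef_rec0 n : hermite_coef n.+1 0 = - hermite_coef n 1.
Proof.
have fact_neq0 := natf_fact_neq0.
case: (leq_parity_cases n 0) => [// | [m En] | [m En]].
- case: m En => [|m] En.
    by rewrite En (hermite_coef_odd _ _ 0) ?hermite_coef_small ?oppr0.
  rewrite (hermite_coef_odd n.+1 0 m.+1) ?(hermite_coef_odd n 1 m) ?oppr0 //; lia.
- rewrite (hermite_coef_even n.+1 0 m.+1) ?(hermite_coef_even n 1 m); try lia.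
  subst n; rewrite !factS fact0 !natrM -!natr1 natrD natrM !exprS; field.
  by rewrite !fact_neq0 !natr1 !pnatr_eq0.
Qed.

Lemma size_hermite_leq n : (size (hermite R n) <= n.+1)%N.
Proof. by apply/leq_sizeP => j lt_nj; rewrite coef_hermite hermite_coef_small. Qed.

Lemma hermite0 : hermite R 0 = 1.
Proof.
apply/polyP => k; rewrite coef_hermite coefC.
case: k => [|k]; last by rewrite hermite_coef_small.
by rewrite (hermite_coef_even _ _ 0) // !mul1r invr1 mulr1.
Qed.

Lemma hermite_rec n : hermite R n.+1 = 2 *: ('X * hermite R n) - (hermite R n)^`().
Proof.
apply/polyP => k; rewrite coefB coefZ coefXM coef_deriv !coef_hermite.
case: k => [|k]; first by rewrite mulr0 sub0r -mulr_natr mulr1 hermite_coef_rec0.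
by rewrite /= hermite_coef_rec !mulr_natl.
Qed.

Lemma hermite_nderiv n i :
  (hermite R n)^`N(i) = ('C(n, i)%:R * 2 ^+ i) *: hermite R (n - i).
Proof.
have fact_neq0 := natf_fact_neq0.
apply/polyP => j; rewrite coef_nderivn coefZ !coef_hermite -[in LHS]mulr_natr.
case: (leq_parity_cases n (i + j)) => [lt_n | [m En] | [m En]].
- rewrite hermite_coef_small // mul0r; case: (leqP i n) => le_in.
    by rewrite hermite_coef_small ?mulr0 //; lia.
  by rewrite bin_small // !mul0r.
- rewrite (hermite_coef_even _ _ _ En) (hermite_coef_even (n - i) j m); last lia.
  have le_in : (i <= n)%N by lia.
  rewrite !natf_bin ?leq_addr // addKn exprD; field.
  by rewrite !fact_neq0.
- rewrite (hermite_coef_odd _ _ _ En) (hermite_coef_odd (n - i) j m) ?mul0r ?mulr0 //.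
  lia.
Qed.

Lemma hermite_deriv n : (hermite R n.+1)^`() = (2 * n.+1%:R) *: hermite R n.
Proof. by rewrite -nderivn1 hermite_nderiv bin1 subn1 expr1 mulrC. Qed.

Lemma hermite_comp_scaleD k (a b : R) :
  hermite R k \Po ((a + b) *: 'X) =
  \sum_(i < k.+1) ('C(k, i)%:R * (2 * b) ^+ i) *:
     ((hermite R (k - i) \Po (a *: 'X)) * 'X^i).
Proof.
rewrite {1}/comp_poly scalerDl.
rewrite (@nderiv_taylor_wide _ k.+1 _ (a *: 'X) (b *: 'X)); first last.
- by rewrite size_map_polyC size_hermite_leq.
- exact: mulrC.
apply: eq_bigr => i _.
rewrite nderivn_map -/(comp_poly (a *: 'X) _) hermite_nderiv comp_polyZ.
by rewrite exprZn exprMn -scalerAr -scalerAl scalerA; congr (_ *: _); ring.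
Qed.

Lemma hermite_scaled_addr_half (c : R) k :
  hermite_scaled (c + 2^-1) k =
  \sum_(i < k.+1) 'C(k, i)%:R *: (hermite_scaled c i * 'X^(k - i)).
Proof.
rewrite /hermite_scaled hermite_comp_scaleD (reindex_inj rev_ord_inj) /=.
apply: eq_bigr => i _.
have le_ik : (i <= k)%N by rewrite -ltnS.
by rewrite subSS (subKn le_ik) bin_sub // divff ?expr1n ?mulr1 ?pnatr_eq0.
Qed.

Lemma hermite_scaled_rec (c : R) n :
  hermite_scaled c n.+2 =
  (2 * c) *: ('X * hermite_scaled c n.+1) - (2 * n.+1%:R) *: hermite_scaled c n.
Proof.
rewrite /hermite_scaled hermite_rec hermite_deriv comp_polyB !comp_polyZ comp_polyM.
by rewrite comp_polyX -scalerAl scalerA.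
Qed.

End Hermite.

Lemma derivn_poly_def (R : nzRingType) (p : {poly R}) n :
  p^`(n) = \sum_(k < size p) (p`_k * (k ^_ n)%:R) *: 'X^(k - n).
Proof.
rewrite -{1}[p]coefK poly_def linear_sum /=.
by apply: eq_bigr => k _; rewrite derivnZ derivnXn -scaler_nat scalerA.
Qed.

Lemma Tbeta_expansion (R : numFieldType) (beta : R) (p : {poly R}) :
  Tbeta beta p =
  \sum_(n < size p) (n`!%:R)^-1 *: (hermite_scaled ((beta - 1) / 2) n * p^`(n)).
Proof.
set c := (beta - 1) / 2.
rewrite /Tbeta (_ : beta / 2 = c + 2^-1); last by rewrite /c; field.
under eq_bigr => k _ do rewrite hermite_scaled_addr_half.
under [RHS]eq_bigr => n _ do rewrite derivn_poly_def mulr_sumr scaler_sumr.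
rewrite exchange_big /=; apply: eq_bigr => k _.
rewrite scaler_sumr (big_ord_widen (size p)
  (fun i => p`_k *: ('C(k, i)%:R *: (hermite_scaled c i * 'X^(k - i)))) (ltn_ord k)).
rewrite big_mkcond /=.
apply: eq_bigr => n _; case: ltnP => [le_nk | lt_kn]; last first.
  by rewrite ffact_small // mulr0 scale0r mulr0 scaler0.
rewrite -scalerAr !scalerA -bin_ffact natrM; congr (_ *: _).
by field; rewrite natf_fact_neq0.
Qed.

Lemma exists_seq_nth [T : Type] (x0 : T) (Q : nat -> T -> Prop) N :
  (forall i, (i < N)%N -> exists x, Q i x) ->
  exists2 s : seq T, size s = N & forall i, (i < N)%N -> Q i (nth x0 s i).
Proof.
elim: N => [|N IH] exQ; first by exists [::].
have [s size_s Qs] := IH (fun i lt_iN => exQ i (ltnW lt_iN)).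
have [x Qx] := exQ N (ltnSn N).
exists (rcons s x) => [|i lt_iN1]; first by rewrite size_rcons size_s.
rewrite nth_rcons size_s.
case: (ltngtP i N) => [lt_iN | lt_Ni | ->]; [exact: Qs | lia | exact: Qx].
Qed.

Section RealRoots.
Variable R : rcfType.
Implicit Types (p : {poly R}) (x : R) (t : seq R).

Lemma prod_subr_sign_gt0 x t i : (i <= size t)%N ->
  (forall j, (j < i)%N -> t`_j < x) ->
  (forall j, (i <= j < size t)%N -> x < t`_j) ->
  0 < (-1) ^+ (size t - i) * \prod_(z <- t) (x - z).
Proof.
elim: t i => [|z t IH] [|i] le_it below above /=; rewrite ?big_nil ?mulr1 ?ltr01 //.
- have gt0_zx : 0 < z - x by rewrite subr_gt0; apply: (above 0%N).
  have := IH 0%N (leq0n _) (fun j (lt_j0 : (j < 0)%N) => False_ind _ (notF lt_j0))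
    (fun j => above j.+1).
  rewrite big_cons !subn0 exprS => /(mulr_gt0 gt0_zx); congr (0 < _); ring.
- have gt0_xz : 0 < x - z by rewrite subr_gt0; apply: (below 0%N).
  have := IH i le_it (fun j => below j.+1) (fun j => above j.+1).
  rewrite big_cons subSS => /(mulr_gt0 gt0_xz); congr (0 < _); ring.
Qed.

Lemma poly_pos_right [p] : 0 < lead_coef p -> forall x, exists2 y, x < y & 0 < p.[y].
Proof.
move=> lc_gt0 x; have [N geN] := poly_pinfty_gt_lc lc_gt0.
exists (Num.max N (x + 1)); first by rewrite lt_max ltrDl ltr01 orbT.
by apply: lt_le_trans lc_gt0 (geN _ _); rewrite le_max lexx.
Qed.

Lemma poly_signed_pos_left [p] : 0 < lead_coef p ->
  forall x, exists2 y, y < x & 0 < (-1) ^+ (size p).-1 * p.[y].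
Proof.
move=> lc_gt0 x; pose q : {poly R} := (-1) ^+ (size p).-1 *: (p \Po - 'X).
have lcq_gt0 : 0 < lead_coef q.
  rewrite lead_coefZ lead_coef_comp ?size_polyN ?size_polyX // lead_coefN lead_coefX.
  by rewrite mulrCA -exprD addnn -signr_odd odd_double mulr1.
have [y lt_xy qy_gt0] := poly_pos_right lcq_gt0 (- x).
exists (- y); first by rewrite ltrNl.
by move: qy_gt0; rewrite hornerZ horner_comp hornerN hornerX.
Qed.

Lemma signr_alternate_mul_lt0 [e] [u v : R] :
  0 < (-1) ^+ e * u -> 0 < (-1) ^+ e.+1 * v -> u * v < 0.
Proof.
rewrite exprS -signr_odd; case: (odd e); rewrite ?expr1 ?expr0 => u_pos v_pos; nra.
Qed.

Definition interlacing (r s : seq R) : Prop :=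
  size s = (size r).+1 /\ forall i, (i < size r)%N -> s`_i < r`_i < s`_i.+1.

Lemma interlacing_sorted [r s] : interlacing r s -> sorted <%R s.
Proof.
move=> [size_s r_s]; apply/(sortedP 0) => i; rewrite size_s ltnS => /r_s /andP[].
exact: lt_trans.
Qed.

Lemma real_interlacing_prod_XsubC t r : interlacing t r ->
  real_interlacing (\prod_(z <- t) ('X - z%:P)) (\prod_(z <- r) ('X - z%:P)).
Proof.
move=> [size_r t_r]; exists t, r.
by split; rewrite ?monic_neq0 ?monic_prod_XsubC ?size_prod_XsubC //;
  split=> //; apply/allP => x; rewrite root_prod_XsubC.
Qed.

Section ThreeTermRecurrence.
Variables (P : nat -> {poly R}) (a b : nat -> R).
Hypothesis P0 : P 0 = 1.
Hypothesis P1 : P 1 = 'X - (a 0)%:P.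
Hypothesis P_rec : forall n, P n.+2 = ('X - (a n.+1)%:P) * P n.+1 - b n *: P n.
Hypothesis b_gt0 : forall n, 0 < b n.

Section Step.
Variables (n : nat) (t r : seq R).
Hypothesis size_t : size t = n.
Hypothesis Pn : P n = \prod_(z <- t) ('X - z%:P).
Hypothesis Pn1 : P n.+1 = \prod_(z <- r) ('X - z%:P).
Hypothesis t_r : interlacing t r.

Let size_r : size r = n.+1. Proof. by rewrite (proj1 t_r) size_t. Qed.

Let monic_Pn1 : P n.+1 \is monic. Proof. by rewrite Pn1 monic_prod_XsubC. Qed.

Let size_Pn1 : size (P n.+1) = n.+2. Proof. by rewrite Pn1 size_prod_XsubC size_r. Qed.

Let size_XsubC_Pn1 : size (('X - (a n.+1)%:P) * P n.+1) = n.+3.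
Proof. by rewrite size_mul ?polyXsubC_eq0 ?monic_neq0 // size_XsubC size_Pn1. Qed.

Let size_bPn_lt :
  (size (- (b n *: P n))%R < size (('X - (a n.+1)%:P) * P n.+1)%R)%N.
Proof.
rewrite size_polyN size_XsubC_Pn1 (@leq_ltn_trans (size (P n))) ?size_scale_leq //.
by rewrite Pn size_prod_XsubC size_t.
Qed.

Lemma size_P_next : size (P n.+2) = n.+3.
Proof. by rewrite P_rec size_polyDl. Qed.

Lemma lead_coef_P_next : lead_coef (P n.+2) = 1.
Proof.
by rewrite P_rec lead_coefDl // lead_coefM lead_coefXsubC (monicP monic_Pn1) mulr1.
Qed.

Lemma sign_P_next_at_roots [i] : (i <= n)%N -> 0 < (-1) ^+ (n - i).+1 * (P n.+2).[r`_i].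
Proof.
move=> le_in.
have r_le j k : (j <= k)%N -> (k <= n)%N -> r`_j <= r`_k.
  move=> le_jk le_kn.
  by rewrite (lt_sorted_leq_nth 0 (interlacing_sorted t_r)) ?inE ?size_r ?ltnS //; lia.
have Pn_sign : 0 < (-1) ^+ (n - i) * (P n).[r`_i].
  rewrite Pn horner_prod -size_t; under eq_bigr => z _ do rewrite hornerXsubC.
  apply: prod_subr_sign_gt0 => [|j lt_ji|j /andP[le_ij lt_jn]]; rewrite ?size_t //.
    have lt_jt : (j < size t)%N by rewrite size_t (leq_trans lt_ji).
    have /andP[_ lt_t_r] := (proj2 t_r) j lt_jt.
    exact: lt_le_trans lt_t_r (r_le _ _ lt_ji le_in).
  have /andP[lt_r_t _] := (proj2 t_r) j lt_jn.
  by apply: le_lt_trans (r_le _ _ le_ij _) lt_r_t; rewrite -size_t ltnW.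
have root_ri : root (P n.+1) r`_i by rewrite Pn1 root_prod_XsubC mem_nth ?size_r.
rewrite P_rec hornerD hornerN hornerZ hornerM hornerXsubC (rootP root_ri) mulr0 add0r.
rewrite exprS mulN1r mulNr mulrN opprK mulrCA.
exact: mulr_gt0.
Qed.

Lemma root_P_next_between i : (i < n.+2)%N ->
  exists x, [/\ root (P n.+2) x, (0 < i)%N -> r`_i.-1 < x & (i <= n)%N -> x < r`_i].
Proof.
have lc_gt0 : 0 < lead_coef (P n.+2) by rewrite lead_coef_P_next ltr01.
have root_in y z : y <= z -> (P n.+2).[z] * (P n.+2).[y] < 0 ->
    exists2 x, root (P n.+2) x & y < x < z.
  move=> le_yz; rewrite mulrC => /(poly_ivtoo le_yz) [x].
  by rewrite in_itv /= => yxz root_x; exists x.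
case: i => [|i] lt_i.
  have [y lt_y sign_y] := poly_signed_pos_left lc_gt0 r`_0.
  rewrite size_P_next in sign_y.
  have := sign_P_next_at_roots (leq0n n); rewrite subn0 => sign_r0.
  have [x root_x /andP[_ lt_x]] :=
    root_in _ _ (ltW lt_y) (signr_alternate_mul_lt0 sign_r0 sign_y).
  by exists x.
have [lt_in | le_ni] := ltnP i n.
  have /andP[lt_rt lt_tr] : r`_i < t`_i < r`_i.+1 by apply: (proj2 t_r); rewrite size_t.
  have := sign_P_next_at_roots (ltnW lt_in); rewrite -subnSK // => sign_ri.
  have [x root_x /andP[gt_x lt_x]] := root_in _ _ (ltW (lt_trans lt_rt lt_tr))
    (signr_alternate_mul_lt0 (sign_P_next_at_roots lt_in) sign_ri).
  by exists x.
have Ein : i = n by lia.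
rewrite {}Ein {i lt_i le_ni}.
have [y gt_y Qy_gt0] := poly_pos_right lc_gt0 r`_n.
have sign_y : 0 < (-1) ^+ 0 * (P n.+2).[y] by rewrite mul1r.
have := sign_P_next_at_roots (leqnn n); rewrite subnn => sign_rn.
have [x root_x /andP[gt_x _]] :=
  root_in _ _ (ltW gt_y) (signr_alternate_mul_lt0 sign_y sign_rn).
by exists x; split; rewrite // ltnn.
Qed.

Lemma interlacing_step : exists2 s, P n.+2 = \prod_(z <- s) ('X - z%:P) & interlacing r s.
Proof.
have [s size_s s_between] := @exists_seq_nth _ 0 _ n.+2 root_P_next_between.
have r_s : interlacing r s.
  split=> [|i lt_i]; first by rewrite size_s size_r.
  rewrite size_r in lt_i.
  have [_ _ lt_s_r] := s_between i (ltnW lt_i).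
  have [_ lt_r_s _] := s_between i.+1 lt_i.
  by rewrite lt_s_r ?lt_r_s.
have s_roots : all (root (P n.+2)) s.
  by apply/allP => x /(nthP 0) [i]; rewrite size_s => /s_between [? _ _] <-.
have uniq_s : uniq s := lt_sorted_uniq (interlacing_sorted r_s).
exists s => //.
rewrite [LHS](@all_roots_prod_XsubC _ _ s) ?size_P_next ?size_s ?uniq_rootsE //.
by rewrite lead_coef_P_next scale1r.
Qed.

End Step.

Lemma interlacing_P n : exists t r,
  [/\ size t = n, P n = \prod_(z <- t) ('X - z%:P), P n.+1 = \prod_(z <- r) ('X - z%:P)
    & interlacing t r].
Proof.
elim: n => [|n [t [r [size_t Pn Pn1 t_r]]]].
  exists [::], [:: a 0]; rewrite P0 P1 big_nil big_seq1.
  by split=> //; split.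
have [s Pn2 r_s] := @interlacing_step n t r size_t Pn Pn1 t_r.
by exists r, s; split=> //; rewrite (proj1 t_r) size_t.
Qed.

Lemma real_interlacing_P n : real_interlacing (P n) (P n.+1).
Proof.
have [t [r [_ -> -> t_r]]] := interlacing_P n.
exact: real_interlacing_prod_XsubC.
Qed.

End ThreeTermRecurrence.

End RealRoots.

Theorem theorem4p1 (R : realType) (beta : R) (hbeta : beta != 0) :
  (forall p : {poly R},
     Tbeta beta p =
     \sum_(n < size p)
        ((n`!)%:R)^-1 *: (hermite_scaled ((beta - 1) / 2) n * p^`(n)))
  /\
  (forall n : nat,
     real_interlacing (hermite_scaled ((2 - 1) / 2 : R) n)
                      (hermite_scaled ((2 - 1) / 2 : R) n.+1)).
Proof.
(* The expansion holds for every beta. *)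
split=> [p | n]; first exact: Tbeta_expansion.
have -> : (2 - 1) / 2 = 2^-1 :> R by field.
have two_half : 2 * 2^-1 = 1 :> R by field.
apply: (@real_interlacing_P R _ (fun=> 0) (fun m => 2 * m.+1%:R)) => [| | m | m].
- by rewrite /hermite_scaled hermite0 comp_polyC.
- rewrite /hermite_scaled hermite_rec hermite0 mulr1 derivC subr0 comp_polyZ comp_polyX.
  by rewrite scalerA two_half scale1r subr0.
- by rewrite hermite_scaled_rec two_half scale1r subr0.
- by rewrite mulr_gt0 ?ltr0n.
Qed.
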